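(* Let $R$ be a commutative ring. An $n\times n$ matrix $X$ over $R$ satisfies $XA=AX^T$ for every $n\times n$ reverse circulant matrix $A$ over $R$ if and only if $X$ is a circulant matrix.
   Context: An $n\times n$ matrix $(a_{ij})$ is circulant if $a_{ij}$ depends only on $(j-i)\bmod n$, and reverse circulant if $a_{ij}$ depends only on $(i+j)\bmod n$. *)

From mathcomp Require Import all_boot all_order all_algebra.
Set Implicit Arguments. Unset Strict Implicit. Unset Printing Implicit Defensive.
Import GRing.Theory.
Local Open Scope ring_scope.

Definition circulant (R : Type) (n : nat) (A : 'M[R]_n) : Prop :=
  forall i j i' j' : 'I_n,
    ((j + n - i) %% n = (j' + n - i') %% n)%N -> A i j = A i' j'.

Definition reverse_circulant (R : Type) (n : nat) (A : 'M[R]_n) : Prop :=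
  forall i j i' j' : 'I_n,
    ((i + j) %% n = (i' + j') %% n)%N -> A i j = A i' j'.

From mathcomp Require Import all_boot all_order all_algebra.
Local Open Scope ring_scope.
Import GRing.Theory.

(* Index matrices by Z/n.  Testing X E_s = E_s X^T against the anti-diagonal
   matrices E_s, with (E_s) a b = [a + b = s], gives X i (s - k) = X k (s - i)
   for all i, k, s, which says exactly that X i j depends only on j - i.
   Conversely, if X a b = c (b - a) and A a b = r (a + b), then after shifting
   the summation index both (X A) i k and (A X^T) i k equal
   sum_m c m * r (m + i + k). *)

Lemma val_Zp_sub (n : nat) (i j : 'I_n.+1) :
  val (j - i) = ((j + n.+1 - i) %% n.+1)%N.
Proof. by rewrite /= /Zp_add /Zp_opp /inZp /= modnDmr addnBA // ltnW. Qed.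

Lemma val_Zp_add (n : nat) (i j : 'I_n.+1) : val (i + j) = ((i + j) %% n.+1)%N.
Proof. by []. Qed.

Lemma circulant_subP (R : Type) (n : nat) (X : 'M[R]_n.+1) :
  circulant X <->
  forall i j i' j' : 'I_n.+1, j - i = j' - i' -> X i j = X i' j'.
Proof.
split=> X_circ i j i' j' eq_ij; apply: X_circ.
  by rewrite -!val_Zp_sub eq_ij.
by apply: val_inj; rewrite !val_Zp_sub.
Qed.

Lemma reverse_circulant_addP (R : Type) (n : nat) (A : 'M[R]_n.+1) :
  reverse_circulant A <->
  forall i j i' j' : 'I_n.+1, i + j = i' + j' -> A i j = A i' j'.
Proof.
split=> A_rcirc i j i' j' eq_ij; apply: A_rcirc.
  by rewrite -!val_Zp_add eq_ij.
by apply: val_inj; rewrite !val_Zp_add.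
Qed.

Section AntiDiagonal.

Variables (R : pzSemiRingType) (n : nat).

Definition anti_diag_mx (s : 'I_n.+1) : 'M[R]_n.+1 :=
  \matrix_(a, b) (a + b == s)%:R.

Lemma reverse_circulant_anti_diag_mx (s : 'I_n.+1) :
  reverse_circulant (anti_diag_mx s).
Proof.
by apply/reverse_circulant_addP => a b a' b' eq_ab; rewrite !mxE eq_ab.
Qed.

Lemma mulmx_anti_diag_mxE (X : 'M[R]_n.+1) (s i k : 'I_n.+1) :
  (X *m anti_diag_mx s) i k = X i (s - k).
Proof.
rewrite mxE (bigD1 (s - k)) //= big1 => [|j neq_j].
  by rewrite !mxE subrK eqxx mulr1 addr0.
rewrite mxE; case: eqP => [eq_s|]; last by rewrite mulr0.
by rewrite -eq_s addrK eqxx in neq_j.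
Qed.

Lemma anti_diag_mx_mulmxE (Y : 'M[R]_n.+1) (s i k : 'I_n.+1) :
  (anti_diag_mx s *m Y) i k = Y (s - i) k.
Proof.
rewrite mxE (bigD1 (s - i)) //= big1 => [|j neq_j].
  by rewrite !mxE subrKC eqxx mul1r addr0.
rewrite mxE; case: eqP => [eq_s|]; last by rewrite mul0r.
by rewrite -eq_s addrC addKr eqxx in neq_j.
Qed.

Lemma circulant_of_anti_diag_mx (X : 'M[R]_n.+1) :
  (forall s, X *m anti_diag_mx s = anti_diag_mx s *m X^T) -> circulant X.
Proof.
move=> X_comm; have X_swap i k s : X i (s - k) = X k (s - i).
  by rewrite -mulmx_anti_diag_mxE X_comm anti_diag_mx_mulmxE mxE.
apply/circulant_subP => i j i' j' eq_ij.
rewrite -[j](addrK i') X_swap; congr (X _ _).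
by rewrite -addrA [i' - i]addrC addrA eq_ij addrNK.
Qed.

End AntiDiagonal.

Lemma circulant_mulmx_reverse_circulant (R : comPzSemiRingType) (n : nat)
    (X A : 'M[R]_n.+1) :
  circulant X -> reverse_circulant A -> X *m A = A *m X^T.
Proof.
move=> /circulant_subP X_circ /reverse_circulant_addP A_rcirc.
have XE a b : X a b = X 0 (b - a) by apply: X_circ; rewrite subr0.
have AE a b : A a b = A (a + b) 0 by apply: A_rcirc; rewrite addr0.
apply/matrixP => i k; rewrite !mxE.
rewrite (reindex_inj (addIr i)) [RHS](reindex_inj (addIr k)) /=.
apply: eq_bigr => m _; rewrite !mxE XE [X k _]XE AE [A i _]AE !addrK mulrC.
by rewrite addrA (addrC m).
Qed.

Theorem mainTheorem5 (R : comPzRingType) (n : nat) (X : 'M[R]_n) :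
  (forall A : 'M[R]_n, reverse_circulant A -> X *m A = A *m X^T) <->
  circulant X.
Proof.
case: n X => [|n] X.
  by split=> [_ [] //|_ A _]; apply/matrixP => -[].
split=> [X_comm | X_circ A A_rcirc].
  apply: circulant_of_anti_diag_mx => s.
  exact/X_comm/reverse_circulant_anti_diag_mx.
exact: circulant_mulmx_reverse_circulant.
Qed.
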